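(* Let $S\subseteq\Sigma^n$ be a double-MDS-code and let $R\subseteq S$ be a prime double-code. Then $S$ is prime if and only if $\backslash_i R=\backslash_{i'}R$ for all $i,i'\in[n]$.
   Context: Let $\Sigma=\{0,1,2,3\}$, $[n]=\{1,\ldots,n\}$. An $i$-line of $\Sigma^n$ is a set of the four words that agree in all coordinates except the $i$th; a line is an $i$-line for some $i$. A double-code is a set meeting every line in $0$ or $2$ elements; a double-MDS-code is a set meeting every line in exactly $2$ elements; a double-code is complementable if contained in a double-MDS-code, and prime if complementable, nonempty and not partitionable into two or more nonempty double-codes. For $S\subseteq\Sigma^n$ and $i\in[n]$, $\mathcal E_i(S)$ is the union of all $i$-lines that meet $S$, and $\backslash_i S=\mathcal E_i(S)\setminus S$. *)

From mathcomp Require Import all_boot.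
Set Implicit Arguments. Unset Strict Implicit. Unset Printing Implicit Defensive.

(* Sigma = {0,1,2,3} = 'I_4 ; words of length n: functions [n] -> Sigma,
   with [n] = {1..n} represented by 'I_n. *)
Definition word (n : nat) := {ffun 'I_n -> 'I_4}.

Definition iline n (i : 'I_n) (x : word n) : {set word n} :=
  [set y : word n | [forall j : 'I_n, (j != i) ==> (y j == x j)]].

Definition is_line n (L : {set word n}) : Prop :=
  exists (i : 'I_n) (x : word n), L = iline i x.

Definition double_code n (C : {set word n}) : Prop :=
  forall L, is_line L -> #|L :&: C| = 0 \/ #|L :&: C| = 2.

Definition double_MDS n (C : {set word n}) : Prop :=
  forall L, is_line L -> #|L :&: C| = 2.

Definition complementable n (C : {set word n}) : Prop :=
  exists M : {set word n}, double_MDS M /\ C \subset M.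

Definition partitionable n (C : {set word n}) : Prop :=
  exists P : {set {set word n}},
    [/\ partition P C, 2 <= #|P| &
        forall D, D \in P -> D != set0 /\ double_code D].

Definition prime_code n (C : {set word n}) : Prop :=
  [/\ double_code C, complementable C, C != set0 & ~ partitionable C].

Definition Ext n (i : 'I_n) (S : {set word n}) : {set word n} :=
  \bigcup_(L in [set L : {set word n} | [exists x, L == iline i x] & L :&: S != set0]) L.

Definition bslash n (i : 'I_n) (S : {set word n}) : {set word n} :=
  Ext i S :\: S.

From mathcomp Require Import all_boot zify.

Set Implicit Arguments. Unset Strict Implicit. Unset Printing Implicit Defensive.

(* If all the sets [\_i R] agree then so do all the [E_i(R)] (each is [R] plus
   [\_i R]); a nonempty set that is a union of [i]-lines for every [i] is
   everything, since any two words are joined by a chain of lines.  So [R]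
   meets every line, hence every line in two points, which are then the two
   points of [S] on that line: [R = S].  Conversely [R = S] makes every
   [E_i(R)] the whole space.  Finally, a prime double-MDS-code [S] cannot
   contain a proper nonempty subcode [R], because [S \ R] is then a
   double-code too. *)

Section Lines.

Variable n : nat.
Implicit Types (i : 'I_n) (x y z : word n) (R S T : {set word n}).

Lemma mem_iline i x : x \in iline i x.
Proof. by rewrite inE; apply/forallP => j; apply/implyP. Qed.

Lemma eq_iline i x y : y \in iline i x -> iline i y = iline i x.
Proof.
rewrite inE => /forallP yx; apply/setP => z; rewrite !inE.
apply/forallP/forallP => zl j; apply/implyP => ji;
  by move: (implyP (zl j) ji) (implyP (yx j) ji) => /eqP -> /eqP ->.
Qed.

Lemma iline_is_line i x : is_line (iline i x).
Proof. by exists i, x. Qed.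

Lemma ExtP i R x :
  reflect (exists2 r, r \in R & r \in iline i x) (x \in Ext i R).
Proof.
apply: (iffP bigcupP).
- move=> [L]; rewrite inE => /andP [/existsP [x0 /eqP ->]] /set0Pn [r].
  rewrite inE => /andP [rL rR] xL; exists r => //.
  by rewrite (eq_iline xL).
- move=> [r rR rx]; exists (iline i x); last exact: mem_iline.
  rewrite inE; apply/andP; split; first by apply/existsP; exists x.
  by apply/set0Pn; exists r; rewrite inE rx.
Qed.

Lemma subset_Ext i R : R \subset Ext i R.
Proof. by apply/subsetP => x xR; apply/ExtP; exists x; rewrite ?mem_iline. Qed.

Lemma Ext_bslash i R : Ext i R = R :|: bslash i R.
Proof. by rewrite -{1}(setID (Ext i R) R) (setIidPr (subset_Ext i R)). Qed.

Lemma Ext_iline_closed i R y z :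
  y \in Ext i R -> z \in iline i y -> z \in Ext i R.
Proof.
move=> /ExtP [r rR ry] zy; apply/ExtP; exists r => //.
by rewrite (eq_iline zy).
Qed.

Lemma double_MDS_Ext i S : double_MDS S -> Ext i S = setT.
Proof.
move=> SMDS; apply/setP => x; rewrite inE; apply/ExtP.
have : iline i x :&: S != set0.
  by rewrite -card_gt0 (SMDS _ (iline_is_line i x)).
by case/set0Pn => r; rewrite inE => /andP [rx rS]; exists r.
Qed.

Lemma iline_closed_setT T y :
  (forall i x z, x \in T -> z \in iline i x -> z \in T) -> y \in T -> T = setT.
Proof.
move=> Tclosed yT; apply/setP => x; rewrite inE.
pose diff (z : word n) := [set j | z j != y j].
suff: forall m z, #|diff z| <= m -> z \in T by apply; apply: leqnn.
elim=> [|m IHm] z.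
  rewrite leqn0 cards_eq0 => /eqP diff0.
  suff -> : z = y by [].
  apply/ffunP => j; apply/eqP/negbNE/negP => zyj.
  by have := in_set0 j; rewrite -diff0 inE zyj.
case: (set_0Vmem (diff z)) => [diff0|[j0 j0z]] zm.
  by apply: IHm; rewrite diff0 cards0.
pose z' : word n := [ffun j => if j == j0 then y j else z j].
have diffz' : diff z' = diff z :\ j0.
  apply/setP => j; rewrite !inE ffunE.
  by case: (eqVneq j j0) => [->|jj0]; rewrite ?eqxx ?jj0.
apply: (Tclosed j0 z'); first apply: IHm.
  by rewrite diffz'; move: zm; rewrite (cardsD1 j0) j0z.
rewrite inE; apply/forallP => j; apply/implyP => jj0.
by rewrite ffunE (negbTE jj0).
Qed.

Lemma mem_sub_double_MDS i S R x :
  double_MDS S -> R \subset S -> double_code R ->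
  x \in S -> x \in Ext i R -> x \in R.
Proof.
move=> SMDS RS Rcode xS /ExtP [r rR rx].
have L := iline_is_line i x.
have LR2 : #|iline i x :&: R| = 2.
  case: (Rcode _ L) => // /eqP; rewrite cards_eq0 => /eqP LR0.
  by have := in_set0 r; rewrite -LR0 inE rx rR.
have : iline i x :&: R = iline i x :&: S.
  by apply/eqP; rewrite eqEcard setIS //= LR2 (SMDS _ L).
by move/setP => /(_ x); rewrite !in_setI mem_iline xS.
Qed.

Lemma sub_double_MDS_eqP S R :
  double_MDS S -> R \subset S -> double_code R -> R != set0 ->
  R = S <-> forall i i', bslash i R = bslash i' R.
Proof.
move=> SMDS RS Rcode /set0Pn [r rR]; split.
  by move=> RSeq i i'; rewrite /bslash RSeq !double_MDS_Ext.
move=> bslash_const.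
have Ext_const i i' : Ext i R = Ext i' R by rewrite !Ext_bslash (bslash_const i i').
apply/eqP; rewrite eqEsubset RS /=; apply/subsetP => x xS.
case: (posnP n) => [n0|n_gt0].
  suff -> : x = r by [].
  by apply/ffunP => j; have := ltn_ord j; rewrite {2}n0.
pose i0 := Ordinal n_gt0.
have Ext_full : Ext i0 R = setT.
  apply: (iline_closed_setT (y := r)); last exact: subsetP (subset_Ext _ _) r rR.
  by move=> i y z; rewrite !(Ext_const i0 i); apply: Ext_iline_closed.
by apply: (mem_sub_double_MDS (i := i0) SMDS); rewrite // Ext_full inE.
Qed.

Lemma double_codeD S R :
  double_MDS S -> R \subset S -> double_code R -> double_code (S :\: R).
Proof.
move=> SMDS RS Rcode L Lline.
have := cardsID R (L :&: S).
rewrite (SMDS _ Lline) -setIA (setIidPr RS) setIDA.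
by case: (Rcode _ Lline) => ->; [right|left]; lia.
Qed.

Lemma partitionable_sub_double_MDS S R :
  double_MDS S -> R \subset S -> double_code R -> R != set0 -> R != S ->
  partitionable S.
Proof.
move=> SMDS RS Rcode R0 RneS.
have SR0 : S :\: R != set0.
  by apply: contra RneS; rewrite setD_eq0 => SR; rewrite eqEsubset RS.
have RneSR : R != S :\: R.
  apply: contra R0 => /eqP RSR; apply/eqP/setP => x; rewrite inE.
  by apply/negbTE/negP => xR; have := xR; rewrite {1}RSR inE xR.
exists [set R; S :\: R]; split.
- rewrite -{2}(setID S R) (setIidPr RS); apply: partitionU1 => //.
    by rewrite /partition cover1 trivIset1 inE eq_sym SR0 eqxx.
  by rewrite disjoint_sym -setI_eq0 setIDAC setDIl setDv setI0.
- by rewrite cards2 RneSR.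
- by move=> D /set2P [] ->; split => //; exact: double_codeD.
Qed.

End Lines.

Theorem proposition7 (n : nat) (S R : {set word n}) :
  double_MDS S -> R \subset S -> prime_code R ->
  (prime_code S <-> forall i i' : 'I_n, bslash i R = bslash i' R).
Proof.
move=> SMDS RS Rprime; have [Rcode _ R0 _] := Rprime.
rewrite -(sub_double_MDS_eqP SMDS RS Rcode R0); split; last by move <-.
case=> _ _ _ Snot_part; apply/eqP/contraT => RneS.
by have/Snot_part := partitionable_sub_double_MDS SMDS RS Rcode R0 RneS.
Qed.
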